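(* There exists a strongly oriented graph $D$ such that $\overrightarrow{hn}_{g}(D)=m(D)-n(D)$, where $n(D)$ and $m(D)$ denote the numbers of vertices and arcs of $D$.
   Context: An oriented graph is a digraph obtained from a finite simple graph by orienting each edge in exactly one direction. It is strongly oriented if for every ordered pair $u,v$ of distinct vertices there is a directed path from $u$ to $v$. The geodetic interval function $I_g$ assigns to $(u,v)$ the set of vertices on some shortest directed $(u,v)$-path or some shortest directed $(v,u)$-path. For $S\subseteq V(D)$, $I_g(S)=\bigcup_{u,v\in S}I_g(u,v)$; $C$ is convex if $I_g(C)=C$; the convex hull of $S$ is the smallest convex set containing $S$. A hull set is a set whose convex hull is $V(D)$, and $\overrightarrow{hn}_{g}(D)$ is the minimum size of a hull set. *)

(* A digraph on a finite vertex type T is an arc relation a : rel T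
   (a x y means there is an arc x -> y). *)
From mathcomp Require Import all_boot all_algebra.
Set Implicit Arguments. Unset Strict Implicit. Unset Printing Implicit Defensive.

Section Oriented.
Variable T : finType.
Variable a : rel T.

Definition oriented : Prop :=
  (forall x, ~~ a x x) /\ (forall x y, a x y -> ~~ a y x).

(* p is (the tail of) a directed walk u = x0 -> x1 -> ... -> v, vertex list u :: p,
   length size p *)
Definition dipath (u v : T) (p : seq T) : Prop :=
  path a u p /\ last u p = v.

Definition strongly_oriented : Prop :=
  oriented /\ forall u v : T, u != v -> exists p, dipath u v p.

Definition shortest_dipath (u v : T) (p : seq T) : Prop :=
  dipath u v p /\ forall q, dipath u v q -> size p <= size q.

Definition in_Ig (u v w : T) : Prop :=
  exists p, (shortest_dipath u v p /\ w \in u :: p)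
         \/ (shortest_dipath v u p /\ w \in v :: p).

Definition in_IgS (S : {set T}) (w : T) : Prop :=
  exists u v, [/\ u \in S, v \in S & in_Ig u v w].

Definition convex (C : {set T}) : Prop :=
  forall w, in_IgS C w <-> w \in C.

Definition is_convex_hull (S H : {set T}) : Prop :=
  [/\ convex H, S \subset H & forall C, convex C -> S \subset C -> H \subset C].

Definition hull_set (S : {set T}) : Prop := is_convex_hull S setT.

Definition is_hull_number (k : nat) : Prop :=
  (exists S, hull_set S /\ #|S| = k) /\ (forall S, hull_set S -> k <= #|S|).

Definition num_arcs : nat := #|[set p : T * T | a p.1 p.2]|.

End Oriented.

From mathcomp Require Import all_boot all_algebra.
Set Implicit Arguments. Unset Strict Implicit.

(** The witness is the tournament on four vertices made of the directed
    4-cycle 0 -> 1 -> 2 -> 3 -> 0 and the two chords 0 -> 2, 1 -> 3, so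
    n = 4 and m = 6.  The Hamiltonian cycle makes it strongly oriented.
    There is no arc 0 -> 3 but both 0 -> 1 -> 3 and 0 -> 2 -> 3 exist, so
    I_g(0,3) is the whole vertex set and {0,3} is a hull set; a hull set of
    a graph with at least two vertices has at least two elements, because
    every set with at most one vertex is convex.  Hence hn_g = 2 = m - n. *)

Section Geodetic.
Variable T : finType.
Variable a : rel T.

Lemma in_Ig_refl w : in_Ig a w w w.
Proof.
exists [::]; left; split; last by rewrite mem_seq1.
by split=> [|q _] //; split.
Qed.

Lemma in_Igxx u w : in_Ig a u u w -> w = u.
Proof.
have nil_shortest p : shortest_dipath a u u p -> p = [::].
  by case=> _ /(_ [::]); case: p => // x s /(_ (conj isT erefl)).
by case=> p [] [/nil_shortest->]; rewrite mem_seq1 => /eqP.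
Qed.

Lemma convex_card_le1 (S : {set T}) : #|S| <= 1 -> convex a S.
Proof.
move=> S_le1 w; split=> [[u [v [Su Sv]]]|Sw].
  by rewrite -(card_le1_eqP S_le1 u v Su Sv) => /in_Igxx->.
by exists w, w; split=> //; apply: in_Ig_refl.
Qed.

Lemma convexT : convex a setT.
Proof.
by move=> w; split=> // _; exists w, w; split=> //; apply: in_Ig_refl.
Qed.

Lemma shortest_dipath2 u w v :
  u != v -> ~~ a u v -> a u w -> a w v -> shortest_dipath a u v [:: w; v].
Proof.
move=> neq_uv not_uv uw wv; split=> [|[|x [|y q]] [/= ux last_q]] //=.
  by split=> //=; rewrite uw wv.
- by rewrite last_q eqxx in neq_uv.
- by move: ux; rewrite last_q andbT (negbTE not_uv).
Qed.

Lemma hull_set2 u v : (forall w, in_Ig a u v w) -> hull_set a [set u; v].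
Proof.
move=> Ig_uv; split; [exact: convexT | exact: subsetT |].
move=> C convexC /subsetP uvC; apply/subsetP=> w _; apply/convexC.
by exists u, v; split; rewrite ?uvC // !inE eqxx ?orbT.
Qed.

Lemma hull_set_card_gt1 S : 1 < #|T| -> hull_set a S -> 1 < #|S|.
Proof.
move=> T_gt1 [_ _ minS]; rewrite ltnNge; apply/negP=> S_le1.
have := subset_leq_card (minS S (convex_card_le1 S_le1) (subxx S)).
by rewrite cardsT => /leq_trans/(_ S_le1); rewrite leqNgt T_gt1.
Qed.

Lemma hull_number2 u v :
  u != v -> (forall w, in_Ig a u v w) -> is_hull_number a 2.
Proof.
move=> neq_uv Ig_uv; split=> [|S].
  by exists [set u; v]; rewrite cards2 neq_uv; split=> //; apply: hull_set2.
apply: hull_set_card_gt1.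
by rewrite -cardsT (cardsD1 u) inE (cardsD1 v) !inE eq_sym neq_uv.
Qed.

Lemma dipath_traject (f : T -> T) u k :
  (forall x, a x (f x)) -> dipath a u (iter k f u) (traject f (f u) k).
Proof.
move=> a_f; split; last exact: last_traject.
by apply: sub_path (fpath_traject f u k) => x y /eqP <-.
Qed.

End Geodetic.

Lemma iter_ordS n (u : 'I_n) k : val (iter k (@ordS n) u) = (u + k) %% n.
Proof.
elim: k => [|k IHk] /=; first by rewrite addn0 modn_small.
by rewrite IHk -addn1 modnDml addn1 addnS.
Qed.

Lemma iter_ordS_reach n (u v : 'I_n) : iter (v + n - u) (@ordS n) u = v.
Proof.
apply: val_inj; rewrite /= iter_ordS subnKC; first by rewrite modnDr modn_small.
by rewrite ltnW // ltn_addl.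
Qed.

Lemma strongly_oriented_hamiltonian n (a : rel 'I_n) :
  oriented a -> (forall x, a x (ordS x)) -> strongly_oriented a.
Proof.
move=> orient_a a_ordS; split=> // u v _.
by rewrite -(iter_ordS_reach u v); eexists; apply: dipath_traject.
Qed.

Definition tournament4 : rel 'I_4 :=
  fun x y => (y == ordS x) || (x < 2) && (val y == x + 2).

Notation vertex i := (@Ordinal 4 i isT).

Lemma tournament4_strongly_oriented : strongly_oriented tournament4.
Proof.
apply: strongly_oriented_hamiltonian => [|x]; last by rewrite /tournament4 eqxx.
by split; do ?case=> -[|[|[|[|//]]]] ?.
Qed.

Lemma tournament4_num_arcs : num_arcs tournament4 = 6.
Proof.
rewrite /num_arcs; have -> : [set p : 'I_4 * 'I_4 | tournament4 p.1 p.2] =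
  (vertex 0, vertex 1) |: ((vertex 1, vertex 2) |: ((vertex 2, vertex 3) |:
  ((vertex 3, vertex 0) |: ((vertex 0, vertex 2) |: [set (vertex 1, vertex 3)])))).
  by apply/setP=> -[[[|[|[|[|//]]]] ?] [[|[|[|[|//]]]] ?]]; rewrite !inE.
by rewrite !cardsU1 cards1 !inE.
Qed.

Lemma tournament4_in_Ig03 w : in_Ig tournament4 (vertex 0) (vertex 3) w.
Proof.
have shortest (x : 'I_4) : x \in [:: vertex 1; vertex 2] ->
    shortest_dipath tournament4 (vertex 0) (vertex 3) [:: x; vertex 3].
  by rewrite !inE => /orP[] /eqP->; apply: shortest_dipath2.
have on_shortest x y : x \in [:: vertex 1; vertex 2] ->
    y \in [:: vertex 0; x; vertex 3] -> in_Ig tournament4 (vertex 0) (vertex 3) y.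
  by move=> x12 y_on; exists [:: x; vertex 3]; left; split=> //; apply: shortest.
case: w => -[|[|[|[|//]]]] ?.
- by apply: (on_shortest (vertex 1)).
- by apply: (on_shortest (vertex 1)).
- by apply: (on_shortest (vertex 2)).
- by apply: (on_shortest (vertex 1)).
Qed.

Theorem corollary2 :
  exists (n : nat) (a : rel 'I_n), [/\ (0 < n)%N, strongly_oriented a &
    exists k : nat, is_hull_number a k /\
      (k%:Z = (num_arcs a)%:Z - n%:Z)%R].
Proof.
exists 4, tournament4; split=> //; first exact: tournament4_strongly_oriented.
exists 2; split; last by rewrite tournament4_num_arcs.
exact: hull_number2 tournament4_in_Ig03.
Qed.
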